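(* Let $(B,\partial B)$ be as in the context, with $B$ of Dimension $n$ and $\partial B$ of Dimension $n-1$. Suppose the one-line theorem holds for $B$ (i.e. $E_1^{p,q}(B)=0$ whenever $p>0$ and $q\neq n$) and for $\partial B$ (i.e. $E_1^{p,q}(\partial B)=0$ whenever $p>0$ and $q\neq n-1$). Then it holds for the relative $\mathcal{C}$-spectral sequence: if $E_1^{p,q}(B,\partial B)\neq0$, then $p=0$ or $q=n$.
   Context: $B$ is an open domain in the infinite jet space $J^\infty(E,n)$ of $n$-dimensional submanifolds of a manifold $E$ (a diffiety of Dimension $n$), and $\partial B\subset B$ a $\partial$-admissible subdiffiety of codimension and co-Dimension $1$, with inclusion $\iota_{\partial B}$. $\Lambda$ is the algebra of differential forms on $B$, $\mathcal{C}$ the ideal of Cartan forms, $\mathcal{L}=\ker\iota_{\partial B}^*$, $\mathcal{C}_{\partial B}=\mathcal{C}/(\mathcal{C}\cap\mathcal{L})$. The $\mathcal{C}$-spectral sequence of $B$ has $E_0^{p,q}=\mathcal{C}^p\Lambda^{p+q}/\mathcal{C}^{p+1}\Lambda^{p+q}$ with $d_0$ induced by $d$, and $E_1^{p,q}=H^{q}(E_0^{p,\bullet},d_0)$; $E_r(\partial B)$ is defined likewise from $\Lambda(\partial B)=\Lambda/\mathcal{L}$ and $\mathcal{C}_{\partial B}$. The relative terms are $E_0^{p,q}(B,\partial B)=(\mathcal{C}^p\cap\mathcal{L}\cap\Lambda^{p+q}+\mathcal{C}^{p+1}\Lambda^{p+q})/\mathcal{C}^{p+1}\Lambda^{p+q}$,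 a subcomplex of $(E_0^{p,\bullet},d_0)$, and $E_1^{p,q}(B,\partial B)$ is its $q$-th cohomology. *)

From HB Require Import structures.
From mathcomp Require Import all_boot all_order all_algebra.
Set Implicit Arguments. Unset Strict Implicit. Unset Printing Implicit Defensive.
Import Order.TTheory GRing.Theory Num.Theory.
Local Open Scope ring_scope.

(* The data of (B, dB) as seen by the C-spectral sequence:
   - V       : the (additive group of the) algebra Lambda of differential forms on B
               (all degrees together);
   - deg k   : the homogeneous part Lambda^k (forms of degree k);
   - d       : the exterior differential;
   - cart p  : the p-th power C^p of the Cartan ideal (C^0 = Lambda);
   - bdry    : the ideal L = ker (iota_{dB})^* , so Lambda(dB) = Lambda / L and
               C_{dB}^p is the image of C^p in Lambda / L. *)
Record cdata (V : zmodType) := CData {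
  deg : int -> V -> Prop;
  d : V -> V;
  cart : nat -> V -> Prop;
  bdry : V -> Prop;
  deg0 : forall k, deg k 0;
  degB : forall k x y, deg k x -> deg k y -> deg k (x - y);
  d_sub : forall x y, d (x - y) = d x - d y;
  d_deg : forall k x, deg k x -> deg (k + 1) (d x);
  dd0 : forall x, d (d x) = 0;
  cart0 : forall p, cart p 0;
  cartB : forall p x y, cart p x -> cart p y -> cart p (x - y);
  cart_O : forall x, cart 0 x;
  cartS : forall p x, cart p.+1 x -> cart p x;
  cart_d : forall p x, cart p x -> cart p (d x);
  bdry0 : bdry 0;
  bdryB : forall x y, bdry x -> bdry y -> bdry (x - y);
  bdry_d : forall x, bdry x -> bdry (d x)
}.

Section E1.
Variables (V : zmodType) (X : cdata V).

(* E_1^{p,q}(B) = 0 : every d_0-cocycle of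
   E_0^{p,q} = C^p Lambda^{p+q} / C^{p+1} Lambda^{p+q} is a d_0-coboundary. *)
Definition E1_zero_B (p : nat) (q : int) : Prop :=
  forall w, cart X p w -> deg X (p%:Z + q) w -> cart X p.+1 (d X w) ->
  exists e, [/\ cart X p e, deg X (p%:Z + q - 1) e & cart X p.+1 (w - d X e)].

Definition in_C1L (p : nat) (k : int) (x : V) : Prop :=
  exists c l, [/\ cart X p.+1 c, deg X k c, bdry X l, deg X k l & x = c + l].

(* E_1^{p,q}(dB) = 0, for E_0^{p,q}(dB) = C_{dB}^p Lambda(dB)^{p+q} / C_{dB}^{p+1} Lambda(dB)^{p+q}
   with Lambda(dB) = Lambda/L and C_{dB}^p = image of C^p; i.e.
   E_0^{p,q}(dB) = C^p Lambda^{p+q} / (C^{p+1} Lambda^{p+q} + L^{p+q}). *)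
Definition E1_zero_bd (p : nat) (q : int) : Prop :=
  forall w, cart X p w -> deg X (p%:Z + q) w -> in_C1L p (p%:Z + q + 1) (d X w) ->
  exists e, cart X p e /\ deg X (p%:Z + q - 1) e /\ in_C1L p (p%:Z + q) (w - d X e).

(* E_1^{p,q}(B, dB) = 0, for the subcomplex
   E_0^{p,q}(B,dB) = (C^p \cap L \cap Lambda^{p+q} + C^{p+1} Lambda^{p+q}) / C^{p+1} Lambda^{p+q}
   of E_0^{p,q}; every class has a representative a in C^p \cap L \cap Lambda^{p+q}. *)
Definition E1_zero_rel (p : nat) (q : int) : Prop :=
  forall a, cart X p a -> bdry X a -> deg X (p%:Z + q) a -> cart X p.+1 (d X a) ->
  exists e, [/\ cart X p e, bdry X e, deg X (p%:Z + q - 1) e & cart X p.+1 (a - d X e)].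

End E1.

(* A diagram chase in the short exact sequence 0 -> E_0(B,dB) -> E_0(B) -> E_0(dB) -> 0:
   a relative d_0-cocycle a is exact in E_0(B), say a = d e1 mod C^{p+1}; then e1 is a
   d_0-cocycle of E_0(dB) one degree lower, hence e1 = d e2 + c + l with c in C^{p+1}
   and l in L, and l is a primitive of a in the relative complex. *)
From mathcomp Require Import all_boot all_order all_algebra.
Local Open Scope ring_scope.
Import GRing.Theory.

Section RelativeE1.
Variables (V : zmodType) (X : cdata V).

Lemma cartN p x : cart X p x -> cart X p (- x).
Proof. by move=> Hx; have := cartB (cart0 X p) Hx; rewrite sub0r. Qed.

Lemma cartD p x y : cart X p x -> cart X p y -> cart X p (x + y).
Proof. by move=> Hx Hy; rewrite -[y]opprK; apply: cartB => //; apply: cartN. Qed.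

Lemma d_cocycle_bd_of_primitive p (k : int) a e :
  bdry X a -> deg X k a -> deg X (k - 1) e -> cart X p.+1 (a - d X e) ->
  in_C1L X p k (d X e).
Proof.
move=> ba da de cae; exists (d X e - a), a; split=> //; last by rewrite subrK.
- by rewrite -opprB; apply: cartN.
- by apply: degB => //; have := d_deg de; rewrite subrK.
Qed.

Lemma E1_zero_rel_of_B_bd p q :
  E1_zero_B X p q -> E1_zero_bd X p (q - 1) -> E1_zero_rel X p q.
Proof.
move=> HB Hbd a ca ba da cda.
have [e1 [ce1 de1 cae1]] := HB a ca da cda.
have de1' : deg X (p%:Z + (q - 1)) e1 by rewrite addrA.
have cyc1 : in_C1L X p (p%:Z + (q - 1) + 1) (d X e1).
  by rewrite addrA subrK; apply: d_cocycle_bd_of_primitive cae1.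
have [e2 [ce2 [de2 [c [l [cc dc bl dl e1E]]]]]] := Hbd e1 ce1 de1' cyc1.
have lE : l = e1 - d X e2 - c by rewrite e1E addrC addKr.
exists l; split=> //.
- by rewrite lE; apply: cartB; [apply: cartB => //; apply: cart_d | apply: cartS].
- by rewrite -addrA.
- rewrite lE !d_sub dd0 subr0 opprB addrCA addrC.
  by apply: cartD => //; apply: cart_d.
Qed.

End RelativeE1.

Theorem mainTheorem3 (V : zmodType) (X : cdata V) (n : nat) :
  (forall (p : nat) (q : int), (0 < p)%N -> q != n%:Z -> E1_zero_B X p q) ->
  (forall (p : nat) (q : int), (0 < p)%N -> q != n%:Z - 1 -> E1_zero_bd X p q) ->
  forall (p : nat) (q : int), ~ E1_zero_rel X p q -> p = 0%N \/ q = n%:Z.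
Proof.
move=> HB Hbd p q Hrel.
case: (posnP p) => [->|p_gt0]; first by left.
case: (eqVneq q n%:Z) => [->|qn]; first by right.
exfalso; apply/Hrel/E1_zero_rel_of_B_bd; first exact: HB.
by apply: Hbd => //; rewrite (inj_eq (addIr _)).
Qed.
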